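(* Let $(x(t),y(t))$ be any trajectory of system (5), and define $\Psi(t)=\max_{i\in\mathcal V_F}|x_i(t)|^2_{\mathcal L(y(t))}$ and $q(t)=\max_{i\in\mathcal V_L}|u_i(y(t),t)|+\max_{i\in\mathcal V_F}|w_i(t)|$. Then for all $t\ge0$ the upper Dini derivative satisfies $D^+\sqrt{\Psi(t)}\le q(t)$, where $D^+h(t)=\limsup_{s\to0^+}\frac{h(t+s)-h(t)}{s}$.
   Context: Standing setup. Fix integers $n\ge 2$, $k\ge 1$, $d\ge 1$. The follower set is $\mathcal V_F=\{1,\dots,n\}$ and the leader set is $\mathcal V_L=\{\hat 1,\dots,\hat k\}$ (disjoint from $\mathcal V_F$); $\mathcal V=\mathcal V_F\cup\mathcal V_L$. The interaction topology is a time-varying digraph $\mathcal G_{\sigma(t)}=(\mathcal V,\mathcal E_{\sigma(t)})$, where $\sigma:[0,\infty)\to\mathcal P$ is a piecewise constant switching signal taking values in a finite set $\mathcal P$ of digraphs on $\mathcal V$; no arc of any of these digraphs enters a leader. An arc $(j,i)$ means that $i$ receives information from $j$. Dwell-time assumption: any two consecutive switching instants of $\sigma$ are separated by at least $\tau_D>0$. For $i\in\mathcal V_F$, $N_i(\sigma(t))=\{j\in\mathcal V_F:(j,i)\in\mathcal E_{\sigma(t)}\}$ and $L_i(\sigma(t))=\{j\in\mathcal V_L:(j,i)\in\mathcal E_{\sigma(t)}\}$. System (5): $\dot y_i=u_i(y,t)$ for $i=1,\dots,k$, and $\dot x_i=\sum_{j\in N_i(\sigma(t))}a_{ij}(x,y,t)(x_j-x_i)+\sum_{j\in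 L_i(\sigma(t))}b_{ij}(x,y,t)(y_j-x_i)+w_i(t)$ for $i=1,\dots,n$, where $x_i,y_j\in\mathbb R^d$, $x=(x_1,\dots,x_n)$, $y=(y_1,\dots,y_k)$; each $u_i(y,t)$ is continuous in $y$ and piecewise continuous in $t$; each $w_i$ is continuous; the weights $a_{ij},b_{ij}$ are continuous and satisfy $a_*\le a_{ij}(x,y,t)\le a^*$, $b_{ij}(x,y,t)\ge b_*$ for all $x,y,t$, with constants $0<a_*\le a^*$, $b_*>0$. Set notation: $|\cdot|$ is the Euclidean norm; for a closed convex $K\subset\mathbb R^d$, $|v|_K=\inf_{p\in K}|v-p|$; $\mathcal L(y(t))=\mathrm{co}\{y_1(t),\dots,y_k(t)\}$ (convex hull). *)

From Stdlib Require Import Reals Lra Lia ClassicalEpsilon.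
Open Scope R_scope.

(* Vectors of R^d are modelled as nat -> R; only coordinates c < d matter.
   Agent-indexed families (followers 1..n as 0..n-1, leaders ^1..^k as 0..k-1)
   are nat -> vec. *)
Definition vec := nat -> R.
Definition fam := nat -> vec.

Fixpoint fsum (m : nat) (f : nat -> R) : R :=
  match m with O => 0 | S m' => fsum m' f + f m' end.

(* fmaxS m f = max (f 0, ..., f m);  fmax m f = max_{i < m} f i  (m >= 1) *)
Fixpoint fmaxS (m : nat) (f : nat -> R) : R :=
  match m with O => f O | S m' => Rmax (fmaxS m' f) (f (S m')) end.
Definition fmax (m : nat) (f : nat -> R) : R := fmaxS (pred m) f.

Definition vnorm (d : nat) (v : vec) : R := sqrt (fsum d (fun c => v c ^ 2)).

Definition is_glb (E : R -> Prop) (m : R) : Prop :=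
  (forall r, E r -> m <= r) /\ (forall m', (forall r, E r -> m' <= r) -> m' <= m).

Definition Rinf (E : R -> Prop) : R := epsilon (inhabits 0) (fun m => is_glb E m).

Definition set_dist (d : nat) (v : vec) (K : vec -> Prop) : R :=
  Rinf (fun r => exists p, K p /\ r = vnorm d (fun c => v c - p c)).

Definition conv_hull (k d : nat) (y : fam) : vec -> Prop :=
  fun p => exists lam : nat -> R,
    (forall j, (j < k)%nat -> 0 <= lam j) /\ fsum k lam = 1 /\
    (forall c, (c < d)%nat -> p c = fsum k (fun j => lam j * y j c)).

(* Upper Dini derivative bound: D^+ h(t) <= c, i.e.
   limsup_{s -> 0+} (h(t+s) - h(t))/s <= c, unfolded. *)
Definition dini_upper_le (h : R -> R) (t c : R) : Prop :=
  forall eps, 0 < eps -> exists delta, 0 < delta /\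
    forall s, 0 < s < delta -> (h (t + s) - h t) / s <= c + eps.

Definition right_deriv (f : R -> R) (t l : R) : Prop :=
  forall eps, 0 < eps -> exists delta, 0 < delta /\
    forall s, 0 < s < delta -> Rabs ((f (t + s) - f t) / s - l) < eps.

Definition cont_nonneg (f : R -> R) : Prop :=
  forall t, 0 <= t -> forall eps, 0 < eps -> exists delta, 0 < delta /\
    forall s, 0 <= s -> Rabs (s - t) < delta -> Rabs (f s - f t) < eps.

Definition fam_close (m d : nat) (z z' : fam) (delta : R) : Prop :=
  forall i c, (i < m)%nat -> (c < d)%nat -> Rabs (z' i c - z i c) < delta.

Definition cont_fam (m d : nat) (F : fam -> R) : Prop :=
  forall z eps, 0 < eps -> exists delta, 0 < delta /\
    forall z', fam_close m d z z' delta -> Rabs (F z' - F z) < eps.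

Definition cont_weight (n k d : nat) (F : fam -> fam -> R -> R) : Prop :=
  forall x y t eps, 0 < eps -> exists delta, 0 < delta /\
    forall x' y' t', fam_close n d x x' delta -> fam_close k d y y' delta ->
      Rabs (t' - t) < delta -> Rabs (F x' y' t' - F x y t) < eps.

Definition right_lim (g : R -> R) (t l : R) : Prop :=
  forall eps, 0 < eps -> exists delta, 0 < delta /\
    forall s, t < s < t + delta -> Rabs (g s - l) < eps.
Definition left_lim (g : R -> R) (t l : R) : Prop :=
  forall eps, 0 < eps -> exists delta, 0 < delta /\
    forall s, t - delta < s < t -> Rabs (g s - l) < eps.

Definition piecewise_cont (g : R -> R) : Prop :=
  exists ts : nat -> R, ts O = 0 /\ (forall m, ts m < ts (S m)) /\
    (forall M, exists m, M < ts m) /\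
    forall m, (forall t, ts m < t < ts (S m) -> continuity_pt g t) /\
      (exists l, right_lim g (ts m) l) /\ (exists l, left_lim g (ts (S m)) l).

Definition dwell_switching (nP : nat) (tauD : R) (sigma : R -> nat) : Prop :=
  (forall t, 0 <= t -> (sigma t < nP)%nat) /\
  exists ts : nat -> R, ts O = 0 /\ (forall m, ts (S m) - ts m >= tauD) /\
    forall m t, ts m <= t < ts (S m) -> sigma t = sigma (ts m).

(* right-hand side of the follower dynamics in system (5), coordinate c.
   EF p j i = true iff arc (follower j, follower i) in digraph p;
   EL p j i = true iff arc (leader j, follower i) in digraph p. *)
Definition follower_rhs (n k : nat) (EF EL : nat -> nat -> nat -> bool)
  (sigma : R -> nat) (a b : nat -> nat -> fam -> fam -> R -> R)
  (w : nat -> R -> vec) (x y : fam) (t : R) (i c : nat) : R :=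
  fsum n (fun j => if EF (sigma t) j i then a i j x y t * (x j c - x i c) else 0)
  + fsum k (fun j => if EL (sigma t) j i then b i j x y t * (y j c - x i c) else 0)
  + w i t c.

Definition trajectory (n k d : nat) (EF EL : nat -> nat -> nat -> bool)
  (sigma : R -> nat) (a b : nat -> nat -> fam -> fam -> R -> R)
  (u : nat -> fam -> R -> vec) (w : nat -> R -> vec)
  (x y : R -> fam) : Prop :=
  (forall i c, (i < n)%nat -> (c < d)%nat -> cont_nonneg (fun s => x s i c)) /\
  (forall j c, (j < k)%nat -> (c < d)%nat -> cont_nonneg (fun s => y s j c)) /\
  (forall j c t, (j < k)%nat -> (c < d)%nat -> 0 <= t ->
     right_deriv (fun s => y s j c) t (u j (y t) t c)) /\
  (forall i c t, (i < n)%nat -> (c < d)%nat -> 0 <= t ->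
     right_deriv (fun s => x s i c) t
       (follower_rhs n k EF EL sigma a b w (x t) (y t) t i c)).

From Stdlib Require Import Reals Lra Lia Classical ClassicalEpsilon.
Open Scope R_scope.

(* Fix t and a small step s > 0.  For every follower j pick a point p_j of the
   hull L(y(t)) almost realising the distance |x_j(t)|_L.  To first order
     x_i(t+s) = (1 - s A_i) x_i + s sum_j a_ij x_j + s sum_m b_im y_m + s w_i,
   with A_i the total weight of follower i, so the same convex mixture of
   p_i, the p_j and the leaders y_m, with each leader moved to y_m(t+s), is a
   point of L(y(t+s)).  Its distance to x_i(t+s) is at most
   (1 - s A_i) |x_i - p_i| + s sum_j a_ij |x_j - p_j| + s(|w_i| + max |u_m|)
   up to o(s), hence at most sqrt(Psi(t)) + s (q(t) + eps). *)

Lemma fsum_ext m f g : (forall j, (j < m)%nat -> f j = g j) -> fsum m f = fsum m g.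
Proof.
  induction m; simpl; intros H; [reflexivity|].
  rewrite IHm by (intros; apply H; lia). rewrite H by lia. reflexivity.
Qed.

Lemma fsum_le m f g : (forall j, (j < m)%nat -> f j <= g j) -> fsum m f <= fsum m g.
Proof.
  induction m; simpl; intros H; [lra|].
  assert (fsum m f <= fsum m g) by (apply IHm; intros; apply H; lia).
  assert (f m <= g m) by (apply H; lia). lra.
Qed.

Lemma fsum_plus m f g : fsum m (fun j => f j + g j) = fsum m f + fsum m g.
Proof. induction m; simpl; [lra|]. rewrite IHm. ring. Qed.

Lemma fsum_minus m f g : fsum m (fun j => f j - g j) = fsum m f - fsum m g.
Proof. induction m; simpl; [lra|]. rewrite IHm. ring. Qed.

Lemma fsum_scal m r f : fsum m (fun j => r * f j) = r * fsum m f.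
Proof. induction m; simpl; [lra|]. rewrite IHm. ring. Qed.

Lemma fsum_scal_r m r f : fsum m (fun j => f j * r) = fsum m f * r.
Proof. induction m; simpl; [lra|]. rewrite IHm. ring. Qed.

Lemma fsum_const m r : fsum m (fun _ => r) = INR m * r.
Proof. induction m; simpl fsum; [simpl; lra|]. rewrite IHm, S_INR. ring. Qed.

Lemma fsum_swap m p F :
  fsum m (fun i => fsum p (fun j => F i j)) = fsum p (fun j => fsum m (fun i => F i j)).
Proof.
  induction m; simpl.
  - rewrite fsum_const; ring.
  - rewrite IHm, <- fsum_plus. reflexivity.
Qed.

Lemma fsum_nonneg m f : (forall j, (j < m)%nat -> 0 <= f j) -> 0 <= fsum m f.
Proof.
  intros H. replace 0 with (fsum m (fun _ => 0)) by (rewrite fsum_const; ring).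
  apply fsum_le; auto.
Qed.

Lemma fsum_at0 m f :
  (1 <= m)%nat -> fsum m (fun j => if Nat.eqb j 0 then f j else 0) = f 0%nat.
Proof.
  induction m; intros H; [lia|]. destruct m; simpl; [ring|].
  simpl in IHm. rewrite IHm by lia. ring.
Qed.

Lemma fmax_ge m f i : (i < m)%nat -> f i <= fmax m f.
Proof.
  unfold fmax. intros Hi. assert (Him : (i <= pred m)%nat) by lia. clear Hi.
  induction (pred m) as [|p IH]; simpl.
  - replace i with 0%nat by lia. lra.
  - destruct (Nat.eq_dec i (S p)) as [->|]; [apply Rmax_r|].
    eapply Rle_trans; [apply IH; lia | apply Rmax_l].
Qed.

Lemma fmax_le m f B : (forall i, (i < m)%nat -> f i <= B) -> (1 <= m)%nat -> fmax m f <= B.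
Proof.
  unfold fmax. intros H Hm. assert (H' : forall i, (i <= pred m)%nat -> f i <= B)
    by (intros; apply H; lia). clear H Hm.
  induction (pred m) as [|p IH]; simpl.
  - apply H'; lia.
  - apply Rmax_lub; [apply IH; intros; apply H'; lia | apply H'; lia].
Qed.

Lemma sqrt_fmax_sq_ge m f i :
  (i < m)%nat -> 0 <= f i -> f i <= sqrt (fmax m (fun j => f j ^ 2)).
Proof.
  intros Hi Hf. rewrite <- (sqrt_pow2 (f i)) by exact Hf.
  apply sqrt_le_1_alt, (fmax_ge m (fun j => f j ^ 2) i Hi).
Qed.

Lemma sqrt_fmax_sq_le m f B : (1 <= m)%nat ->
  (forall i, (i < m)%nat -> 0 <= f i <= B) -> sqrt (fmax m (fun j => f j ^ 2)) <= B.
Proof.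
  intros Hm H. assert (HB : 0 <= B) by (destruct (H 0%nat ltac:(lia)); lra).
  rewrite <- (sqrt_pow2 B) by exact HB. apply sqrt_le_1_alt, fmax_le; [|exact Hm].
  intros i Hi. apply pow_incr, H, Hi.
Qed.

Lemma vnorm_nonneg d v : 0 <= vnorm d v.
Proof. apply sqrt_pos. Qed.

Lemma fsum_sq_nonneg d v : 0 <= fsum d (fun c => v c ^ 2).
Proof. apply fsum_nonneg; intros; apply pow2_ge_0. Qed.

Lemma vnorm_ext d v w : (forall c, (c < d)%nat -> v c = w c) -> vnorm d v = vnorm d w.
Proof. intros H; unfold vnorm; f_equal; apply fsum_ext; intros; rewrite H; auto. Qed.

Lemma vnorm_zero d : vnorm d (fun _ => 0) = 0.
Proof.
  unfold vnorm. rewrite (fsum_ext d _ (fun _ => 0)) by (intros; ring).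
  rewrite fsum_const, Rmult_0_r. apply sqrt_0.
Qed.

Lemma vnorm_scal d r v : vnorm d (fun c => r * v c) = Rabs r * vnorm d v.
Proof.
  unfold vnorm. rewrite (fsum_ext d _ (fun c => r ^ 2 * v c ^ 2)) by (intros; ring).
  rewrite fsum_scal, sqrt_mult_alt by apply pow2_ge_0.
  rewrite <- Rsqr_pow2, sqrt_Rsqr_abs. reflexivity.
Qed.

(* Triangle inequality in R^2 for the vectors (P, a), (P', b), with the first
   coordinate of the sum replaced by any Q in [0, P + P']: the inductive step
   of the triangle inequality in R^d. *)
Lemma planar_triangle P P' Q a b : 0 <= P -> 0 <= P' -> 0 <= Q -> Q <= P + P' ->
  sqrt (Q ^ 2 + (a + b) ^ 2) <= sqrt (P ^ 2 + a ^ 2) + sqrt (P' ^ 2 + b ^ 2).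
Proof.
  intros HP HP' HQ HQP.
  set (R1 := sqrt (P ^ 2 + a ^ 2)). set (R2 := sqrt (P' ^ 2 + b ^ 2)).
  assert (E1 : R1 ^ 2 = P ^ 2 + a ^ 2) by (apply pow2_sqrt; nra).
  assert (E2 : R2 ^ 2 = P' ^ 2 + b ^ 2) by (apply pow2_sqrt; nra).
  assert (G1 : 0 <= R1) by apply sqrt_pos. assert (G2 : 0 <= R2) by apply sqrt_pos.
  assert (cauchy_schwarz : P * P' + a * b <= R1 * R2).
  { assert ((P * P' + a * b) ^ 2 <= (R1 * R2) ^ 2).
    { replace ((R1 * R2) ^ 2) with (R1 ^ 2 * R2 ^ 2) by ring. rewrite E1, E2.
      assert (0 <= (P * b - P' * a) ^ 2) by apply pow2_ge_0. nra. }
    assert (0 <= R1 * R2) by nra. nra. }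
  rewrite <- (sqrt_pow2 (R1 + R2)) by lra. apply sqrt_le_1_alt.
  replace ((R1 + R2) ^ 2) with (R1 ^ 2 + R2 ^ 2 + 2 * (R1 * R2)) by ring.
  rewrite E1, E2. nra.
Qed.

Lemma vnorm_add d v w : vnorm d (fun c => v c + w c) <= vnorm d v + vnorm d w.
Proof.
  induction d.
  - unfold vnorm; simpl. rewrite sqrt_0. lra.
  - unfold vnorm in *. change (fsum (S d) ?f) with (fsum d f + f d); cbv beta.
    pose proof (fsum_sq_nonneg d v). pose proof (fsum_sq_nonneg d w).
    pose proof (fsum_sq_nonneg d (fun c => v c + w c)).
    rewrite <- (pow2_sqrt (fsum d (fun c => v c ^ 2))) by auto.
    rewrite <- (pow2_sqrt (fsum d (fun c => w c ^ 2))) by auto.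
    rewrite <- (pow2_sqrt (fsum d (fun c => (v c + w c) ^ 2))) by auto.
    apply planar_triangle; auto; apply sqrt_pos.
Qed.

Lemma vnorm_sub d v w : vnorm d (fun c => v c - w c) <= vnorm d v + vnorm d w.
Proof.
  rewrite (vnorm_ext d _ (fun c => v c + (-1) * w c)) by (intros; ring).
  eapply Rle_trans; [apply (vnorm_add d v (fun c => (-1) * w c))|].
  rewrite vnorm_scal. replace (Rabs (-1)) with 1 by (rewrite Rabs_left; lra). lra.
Qed.

Lemma vnorm_shift d v g : vnorm d v <= vnorm d g + vnorm d (fun c => v c - g c).
Proof.
  rewrite (vnorm_ext d v (fun c => g c + (v c - g c))) by (intros; ring).
  apply vnorm_add.
Qed.

Lemma vnorm_fsum d m F :
  vnorm d (fun c => fsum m (fun j => F j c)) <= fsum m (fun j => vnorm d (F j)).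
Proof.
  induction m; simpl.
  - rewrite vnorm_zero; lra.
  - eapply Rle_trans; [apply (vnorm_add d (fun c => fsum m (fun j => F j c)) (F m))|]. lra.
Qed.

Lemma vnorm_le_l1 d v : vnorm d v <= fsum d (fun c => Rabs (v c)).
Proof.
  induction d.
  - unfold vnorm; simpl. rewrite sqrt_0. lra.
  - unfold vnorm in *. change (fsum (S d) ?f) with (fsum d f + f d); cbv beta.
    pose proof (fsum_sq_nonneg d v).
    set (T := fsum d (fun c => Rabs (v c))) in *.
    assert (0 <= T) by (apply fsum_nonneg; intros; apply Rabs_pos).
    pose proof (Rabs_pos (v d)).
    rewrite <- (sqrt_pow2 (T + Rabs (v d))) by lra. apply sqrt_le_1_alt.
    rewrite <- (pow2_sqrt (fsum d (fun c => v c ^ 2))) by auto.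
    pose proof (sqrt_pos (fsum d (fun c => v c ^ 2))).
    rewrite <- (pow2_abs (v d)). nra.
Qed.

Lemma vnorm_coord_bound d v e :
  (forall c, (c < d)%nat -> Rabs (v c) < e) -> vnorm d v <= INR d * e.
Proof.
  intros H. eapply Rle_trans; [apply vnorm_le_l1|].
  rewrite <- fsum_const. apply fsum_le. intros c Hc. left. apply H, Hc.
Qed.

Lemma glb_of_nonneg (E : R -> Prop) :
  (exists r, E r) -> (forall r, E r -> 0 <= r) -> is_glb E (Rinf E).
Proof.
  intros [r0 Hr0] Hlb. unfold Rinf. apply epsilon_spec.
  set (E' := fun r => E (- r)).
  assert (Hb : bound E') by (exists 0; intros r Hr; specialize (Hlb _ Hr); lra).
  assert (Hne : exists r, E' r) by (exists (- r0); unfold E'; rewrite Ropp_involutive; auto).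
  destruct (completeness E' Hb Hne) as [l [Hub Hleast]].
  exists (- l). split.
  - intros r Hr. assert (E' (- r)) by (unfold E'; rewrite Ropp_involutive; auto).
    specialize (Hub _ H). lra.
  - intros m' Hm'. assert (l <= - m'); [|lra]. apply Hleast. intros r Hr.
    specialize (Hm' _ Hr). lra.
Qed.

Lemma set_dist_glb d v K : (exists p, K p) ->
  is_glb (fun r => exists p, K p /\ r = vnorm d (fun c => v c - p c)) (set_dist d v K).
Proof.
  intros [p Hp]. apply glb_of_nonneg.
  - exists (vnorm d (fun c => v c - p c)). eauto.
  - intros r [p' [_ ->]]. apply vnorm_nonneg.
Qed.

Lemma set_dist_le d v K p : K p -> set_dist d v K <= vnorm d (fun c => v c - p c).
Proof. intros Hp. apply (proj1 (set_dist_glb d v K (ex_intro _ p Hp))). eauto. Qed.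

Lemma set_dist_nonneg d v K : (exists p, K p) -> 0 <= set_dist d v K.
Proof.
  intros Hne. apply (proj2 (set_dist_glb d v K Hne)).
  intros r [p' [_ ->]]. apply vnorm_nonneg.
Qed.

Lemma set_dist_approx d v K eta : (exists p, K p) -> 0 < eta ->
  exists p, K p /\ vnorm d (fun c => v c - p c) < set_dist d v K + eta.
Proof.
  intros Hne Heta. apply NNPP. intros Hnone.
  assert (set_dist d v K + eta <= set_dist d v K); [|lra].
  apply (proj2 (set_dist_glb d v K Hne)). intros r [p [Hp ->]].
  apply Rnot_lt_le. intros Hlt. apply Hnone. eauto.
Qed.

Definition stochastic (k : nat) (lam : nat -> R) : Prop :=
  (forall m, (m < k)%nat -> 0 <= lam m) /\ fsum k lam = 1.

Definition hull_point (k : nat) (lam : nat -> R) (y : fam) : vec :=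
  fun c => fsum k (fun m => lam m * y m c).

Lemma hull_point_in k d lam y : stochastic k lam -> conv_hull k d y (hull_point k lam y).
Proof. intros [H0 H1]. exists lam. repeat split; auto. Qed.

Lemma conv_hull_nonempty k d y : (1 <= k)%nat -> exists p, conv_hull k d y p.
Proof.
  intros Hk. exists (hull_point k (fun j => if Nat.eqb j 0 then 1 else 0) y).
  apply hull_point_in. split.
  - intros j _. destruct (Nat.eqb j 0); lra.
  - apply (fsum_at0 k (fun _ => 1)), Hk.
Qed.

Definition linear_drift (n k : nat) (al be : nat -> R) (X Y : fam) (i : nat) : vec :=
  fun c => fsum n (fun j => al j * (X j c - X i c)) + fsum k (fun m => be m * (Y m c - X i c)).

Section EulerStep.

Variables (n k d : nat) (al be : nat -> R) (lam : nat -> nat -> R) (s : R) (i : nat).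
Hypothesis Hs : 0 < s.
Hypothesis Hal : forall j, (j < n)%nat -> 0 <= al j.
Hypothesis Hbe : forall m, (m < k)%nat -> 0 <= be m.
Hypothesis Hstep : s * (fsum n al + fsum k be) <= 1.
Hypothesis Hlam : forall j, (j < n)%nat -> stochastic k (lam j).
Hypothesis Hi : (i < n)%nat.

(* Weight kept on the follower's own approximating point. *)
Let theta := 1 - s * (fsum n al + fsum k be).

(* Explicit Euler step of the dynamics, applied to the coefficients of the
   approximating hull points, with the leaders as extra vertices. *)
Definition euler_mix (m : nat) : R :=
  theta * lam i m + fsum n (fun j => s * al j * lam j m) + s * be m.

Lemma euler_mix_stochastic : stochastic k euler_mix.
Proof.
  assert (Htheta : 0 <= theta) by (unfold theta; lra).
  split.
  - intros m Hm. unfold euler_mix.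
    assert (0 <= fsum n (fun j => s * al j * lam j m)).
    { apply fsum_nonneg. intros j Hj. pose proof (proj1 (Hlam j Hj) m Hm).
      pose proof (Hal j Hj). apply Rmult_le_pos; nra. }
    pose proof (proj1 (Hlam i Hi) m Hm). pose proof (Hbe m Hm). nra.
  - assert (Hcross : fsum k (fun m => fsum n (fun j => s * al j * lam j m)) = s * fsum n al).
    { rewrite <- fsum_swap, <- fsum_scal. apply fsum_ext. intros j Hj.
      rewrite fsum_scal, (proj2 (Hlam j Hj)). ring. }
    unfold euler_mix. rewrite !fsum_plus, fsum_scal, Hcross, fsum_scal, (proj2 (Hlam i Hi)).
    unfold theta. ring.
Qed.

Lemma euler_mix_point Y c :
  hull_point k euler_mix Y c = theta * hull_point k (lam i) Y c
    + fsum n (fun j => s * al j * hull_point k (lam j) Y c)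
    + s * fsum k (fun m => be m * Y m c).
Proof.
  unfold hull_point, euler_mix.
  rewrite (fsum_ext n _ (fun j => fsum k (fun m => s * al j * lam j m * Y m c)))
    by (intros; rewrite <- fsum_scal; apply fsum_ext; intros; ring).
  rewrite fsum_swap, <- !fsum_scal, <- !fsum_plus. apply fsum_ext. intros m _.
  rewrite (fsum_scal_r n (Y m c) (fun j => s * al j * lam j m)). ring.
Qed.

Variables (X X' Y Y' : fam).

Lemma euler_step_identity c :
  X' i c - hull_point k euler_mix Y' c =
    theta * (X i c - hull_point k (lam i) Y c)
    + fsum n (fun j => s * al j * (X j c - hull_point k (lam j) Y c))
    + s * ((X' i c - X i c) / s - linear_drift n k al be X Y i c)
    - s * fsum k (fun m => euler_mix m * ((Y' m c - Y m c) / s)).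
Proof.
  assert (HY' : hull_point k euler_mix Y' c =
    hull_point k euler_mix Y c + s * fsum k (fun m => euler_mix m * ((Y' m c - Y m c) / s))).
  { unfold hull_point. rewrite <- fsum_scal, <- fsum_plus.
    apply fsum_ext. intros m _. field. lra. }
  assert (Hfollowers : fsum n (fun j => s * al j * (X j c - hull_point k (lam j) Y c)) =
    s * fsum n (fun j => al j * (X j c - X i c)) + s * (fsum n al * X i c)
    - fsum n (fun j => s * al j * hull_point k (lam j) Y c)).
  { rewrite <- fsum_scal_r, <- !fsum_scal, <- fsum_plus, <- fsum_minus.
    apply fsum_ext. intros; ring. }
  assert (Hleaders : s * fsum k (fun m => be m * Y m c) =
    s * fsum k (fun m => be m * (Y m c - X i c)) + s * (fsum k be * X i c)).
  { rewrite <- fsum_scal_r, <- Rmult_plus_distr_l, <- fsum_plus. f_equal.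
    apply fsum_ext. intros; ring. }
  rewrite HY', euler_mix_point, Hfollowers, Hleaders. unfold linear_drift, theta.
  field. lra.
Qed.

Lemma euler_step_bound G Bx By :
  0 <= G ->
  (forall j, (j < n)%nat -> vnorm d (fun c => X j c - hull_point k (lam j) Y c) <= G) ->
  vnorm d (fun c => (X' i c - X i c) / s - linear_drift n k al be X Y i c) <= Bx ->
  (forall m, (m < k)%nat -> vnorm d (fun c => (Y' m c - Y m c) / s) <= By) ->
  set_dist d (X' i) (conv_hull k d Y') <= G + s * (Bx + By).
Proof.
  intros HG Hp HBx HBy.
  pose proof euler_mix_stochastic as [Hmix0 Hmix1].
  assert (Htheta : 0 <= theta) by (unfold theta; lra).
  eapply Rle_trans; [apply set_dist_le, (hull_point_in k d _ Y' euler_mix_stochastic)|].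
  rewrite (vnorm_ext d _ _ (fun c _ => euler_step_identity c)).
  eapply Rle_trans; [apply vnorm_sub|]. eapply Rle_trans; [apply Rplus_le_compat_r, vnorm_add|].
  eapply Rle_trans; [apply Rplus_le_compat_r, Rplus_le_compat_r, vnorm_add|].
  rewrite !vnorm_scal, Rabs_pos_eq, (Rabs_pos_eq s) by lra.
  assert (Hown : vnorm d (fun c => X i c - hull_point k (lam i) Y c) <= G) by (apply Hp, Hi).
  assert (Hothers : vnorm d (fun c => fsum n (fun j => s * al j * (X j c - hull_point k (lam j) Y c)))
                    <= s * fsum n al * G).
  { eapply Rle_trans; [apply (vnorm_fsum d n (fun j c => s * al j * (X j c - hull_point k (lam j) Y c)))|].
    rewrite Rmult_assoc, <- fsum_scal_r, <- fsum_scal. apply fsum_le. intros j Hj.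
    pose proof (Hal j Hj). rewrite vnorm_scal, Rabs_pos_eq by nra.
    rewrite Rmult_assoc. apply Rmult_le_compat_l; [lra|]. apply Rmult_le_compat_l; auto. }
  assert (Hleaders : vnorm d (fun c => fsum k (fun m => euler_mix m * ((Y' m c - Y m c) / s))) <= By).
  { eapply Rle_trans; [apply (vnorm_fsum d k (fun m c => euler_mix m * ((Y' m c - Y m c) / s)))|].
    replace By with (fsum k (fun m => euler_mix m * By)) by (rewrite fsum_scal_r, Hmix1; ring).
    apply fsum_le. intros m Hm. rewrite vnorm_scal, Rabs_pos_eq by auto.
    apply Rmult_le_compat_l; auto. }
  assert (0 <= s * fsum k be * G)
    by (pose proof (fsum_nonneg k be Hbe); apply Rmult_le_pos; nra).
  unfold theta in *. nra.
Qed.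

End EulerStep.

Lemma fin_delta m (Q : nat -> R -> Prop) :
  (forall i, (i < m)%nat -> exists dl, 0 < dl /\ forall s, 0 < s < dl -> Q i s) ->
  exists dl, 0 < dl /\ forall i s, (i < m)%nat -> 0 < s < dl -> Q i s.
Proof.
  induction m; intros H.
  - exists 1. split; [lra | intros; lia].
  - destruct IHm as [d1 [Hd1 H1]]; [intros; apply H; lia|].
    destruct (H m) as [d2 [Hd2 H2]]; [lia|].
    exists (Rmin d1 d2). split; [apply Rmin_pos; auto|].
    intros i s Hi Hs. pose proof (Rmin_r d1 d2). pose proof (Rmin_l d1 d2).
    destruct (Nat.eq_dec i m) as [->|]; [apply H2; lra | apply H1; [lia | lra]].
Qed.

Lemma fin_choice {A : Type} m (P : nat -> A -> Prop) (a0 : A) :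
  (forall i, (i < m)%nat -> exists z, P i z) ->
  exists f : nat -> A, forall i, (i < m)%nat -> P i (f i).
Proof.
  induction m; intros H.
  - exists (fun _ => a0). intros; lia.
  - destruct IHm as [f Hf]; [intros; apply H; lia|].
    destruct (H m) as [z Hz]; [lia|].
    exists (fun i => if Nat.eqb i m then z else f i). intros i Hi.
    destruct (Nat.eqb i m) eqn:E; [apply Nat.eqb_eq in E; subst; auto|].
    apply Nat.eqb_neq in E. apply Hf. lia.
Qed.

Lemma right_deriv_uniform m d (f : R -> fam) (g : fam) t eta :
  (forall j c, (j < m)%nat -> (c < d)%nat -> right_deriv (fun s => f s j c) t (g j c)) ->
  0 < eta ->
  exists dl, 0 < dl /\ forall s j, (j < m)%nat -> 0 < s < dl ->
    vnorm d (fun c => (f (t + s) j c - f t j c) / s - g j c) <= INR d * eta.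
Proof.
  intros Hder Heta.
  destruct (fin_delta m (fun j s => forall c, (c < d)%nat ->
      Rabs ((f (t + s) j c - f t j c) / s - g j c) < eta)) as [dl [Hdl Hq]].
  - intros j Hj. destruct (fin_delta d (fun c s =>
        Rabs ((f (t + s) j c - f t j c) / s - g j c) < eta)) as [dl [Hdl Hq]].
    + intros c Hc. apply (Hder j c Hj Hc eta Heta).
    + exists dl. split; [exact Hdl|]. intros s Hs c Hc. apply Hq; auto.
  - exists dl. split; [exact Hdl|]. intros s j Hj Hs. apply vnorm_coord_bound, Hq; auto.
Qed.

Lemma small_step m (A : nat -> R) : (forall i, (i < m)%nat -> 0 <= A i) ->
  exists dl, 0 < dl /\ forall i s, (i < m)%nat -> 0 < s < dl -> s * A i <= 1.
Proof.
  intros HA. apply fin_delta. intros i Hi. pose proof (HA i Hi).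
  exists (/ (A i + 1)). split; [apply Rinv_0_lt_compat; lra|].
  intros s Hs. assert (s * (A i + 1) <= 1); [|nra].
  apply Rmult_le_reg_r with (/ (A i + 1)); [apply Rinv_0_lt_compat; lra|].
  rewrite Rmult_assoc, Rinv_r, Rmult_1_r, Rmult_1_l by lra. lra.
Qed.

Lemma near_hull_coeffs n k d (X Y : fam) eta : (1 <= k)%nat -> 0 < eta ->
  exists lam : nat -> nat -> R, forall j, (j < n)%nat ->
    stochastic k (lam j) /\
    vnorm d (fun c => X j c - hull_point k (lam j) Y c) <= set_dist d (X j) (conv_hull k d Y) + eta.
Proof.
  intros Hk Heta.
  apply (fin_choice n (fun j (L : nat -> R) => stochastic k L /\
    vnorm d (fun c => X j c - hull_point k L Y c) <= set_dist d (X j) (conv_hull k d Y) + eta)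
    (fun _ => 0)).
  intros j Hj.
  destruct (set_dist_approx d (X j) _ eta (conv_hull_nonempty k d Y Hk) Heta)
    as [p [[L [HL0 [HL1 HLp]]] Hp]].
  exists L. split; [split; auto|]. left. eapply Rle_lt_trans; [|exact Hp].
  right. apply vnorm_ext. intros c Hc. rewrite HLp by exact Hc. reflexivity.
Qed.

Definition gated (flag : bool) (r : R) : R := if flag then r else 0.

Lemma gated_nonneg flag r : 0 <= r -> 0 <= gated flag r.
Proof. destruct flag; simpl; lra. Qed.

Lemma follower_rhs_drift n k EF EL sigma a b w X Y t i c :
  follower_rhs n k EF EL sigma a b w X Y t i c =
    linear_drift n k (fun j => gated (EF (sigma t) j i) (a i j X Y t))
                     (fun m => gated (EL (sigma t) m i) (b i m X Y t)) X Y i c + w i t c.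
Proof.
  unfold follower_rhs, linear_drift. do 2 f_equal; apply fsum_ext; intros j _;
    unfold gated; destruct (EF _ _ _) || destruct (EL _ _ _); ring.
Qed.

Lemma hull_dist_growth n k d EF EL sigma a b u w (x y : R -> fam) t D eps :
  (1 <= k)%nat ->
  (forall i j X Y s, (i < n)%nat -> (j < n)%nat -> 0 <= a i j X Y s) ->
  (forall i j X Y s, (i < n)%nat -> (j < k)%nat -> 0 <= b i j X Y s) ->
  (forall j c, (j < k)%nat -> (c < d)%nat ->
     right_deriv (fun s => y s j c) t (u j (y t) t c)) ->
  (forall i c, (i < n)%nat -> (c < d)%nat ->
     right_deriv (fun s => x s i c) t (follower_rhs n k EF EL sigma a b w (x t) (y t) t i c)) ->
  (forall j, (j < n)%nat -> set_dist d (x t j) (conv_hull k d (y t)) <= D) ->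
  0 < eps ->
  exists delta, 0 < delta /\ forall s i, 0 < s < delta -> (i < n)%nat ->
    set_dist d (x (t + s) i) (conv_hull k d (y (t + s))) <=
      D + s * (fmax k (fun j => vnorm d (u j (y t) t)) + fmax n (fun i => vnorm d (w i t)) + eps).
Proof.
  intros Hk Ha Hb Hy Hx HD Heps.
  set (al := fun i j => gated (EF (sigma t) j i) (a i j (x t) (y t) t)).
  set (be := fun i m => gated (EL (sigma t) m i) (b i m (x t) (y t) t)).
  set (eta := eps / (2 * INR d + 1)).
  assert (Hden : 0 < 2 * INR d + 1) by (pose proof (pos_INR d); lra).
  assert (Heta : 0 < eta) by (apply Rdiv_lt_0_compat; lra).
  assert (Hal : forall i, (i < n)%nat -> forall j, (j < n)%nat -> 0 <= al i j)
    by (intros; apply gated_nonneg, Ha; auto).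
  assert (Hbe : forall i, (i < n)%nat -> forall m, (m < k)%nat -> 0 <= be i m)
    by (intros; apply gated_nonneg, Hb; auto).
  destruct (right_deriv_uniform n d x _ t eta Hx Heta) as [d1 [Hd1 Rx]].
  destruct (right_deriv_uniform k d y _ t eta Hy Heta) as [d2 [Hd2 Ry]].
  destruct (small_step n (fun i => fsum n (al i) + fsum k (be i))) as [d3 [Hd3 Rs]].
  { intros i Hi. pose proof (fsum_nonneg n (al i) (Hal i Hi)).
    pose proof (fsum_nonneg k (be i) (Hbe i Hi)). lra. }
  exists (Rmin d1 (Rmin d2 d3)). split; [repeat apply Rmin_pos; auto|].
  intros s i Hs Hi.
  pose proof (Rmin_l d1 (Rmin d2 d3)). pose proof (Rmin_r d1 (Rmin d2 d3)).
  pose proof (Rmin_l d2 d3). pose proof (Rmin_r d2 d3).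
  destruct (near_hull_coeffs n k d (x t) (y t) (s * eta) Hk ltac:(nra)) as [lam Hlam].
  assert (HG : 0 <= D) by (eapply Rle_trans; [apply set_dist_nonneg, conv_hull_nonempty, Hk | apply HD, Hi]).
  eapply Rle_trans.
  - apply (euler_step_bound n k d (al i) (be i) lam s i ltac:(lra) (Hal i Hi) (Hbe i Hi)
             ltac:(apply Rs; auto; lra) (fun j Hj => proj1 (Hlam j Hj)) Hi
             (x t) (x (t + s)) (y t) (y (t + s))
             (D + s * eta) (fmax n (fun i => vnorm d (w i t)) + INR d * eta)
             (fmax k (fun j => vnorm d (u j (y t) t)) + INR d * eta)); [nra| | |].
    + intros j Hj. pose proof (proj2 (Hlam j Hj)). pose proof (HD j Hj). lra.
    + eapply Rle_trans; [apply (vnorm_shift d _ (w i t))|]. apply Rplus_le_compat.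
      * apply (fmax_ge n (fun i => vnorm d (w i t)) i Hi).
      * replace (vnorm d _) with (vnorm d (fun c => (x (t + s) i c - x t i c) / s
            - follower_rhs n k EF EL sigma a b w (x t) (y t) t i c)); [apply (Rx s i Hi); lra|].
        apply vnorm_ext. intros c _. rewrite follower_rhs_drift. unfold al, be. ring.
    + intros m Hm. eapply Rle_trans; [apply (vnorm_shift d _ (u m (y t) t))|].
      apply Rplus_le_compat; [apply (fmax_ge k (fun j => vnorm d (u j (y t) t)) m Hm)|].
      apply (Ry s m Hm); lra.
  - assert (eta * (2 * INR d + 1) = eps) by (unfold eta; field; lra). nra.
Qed.

Theorem lemma4 (n k d : nat) (Hn : (2 <= n)%nat) (Hk : (1 <= k)%nat) (Hd : (1 <= d)%nat)
  (nP : nat) (EF EL : nat -> nat -> nat -> bool)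
  (tauD : R) (HtauD : 0 < tauD) (sigma : R -> nat)
  (Hsigma : dwell_switching nP tauD sigma)
  (a b : nat -> nat -> fam -> fam -> R -> R)
  (a_lo a_hi b_lo : R) (Ha_lo : 0 < a_lo) (Ha_lohi : a_lo <= a_hi) (Hb_lo : 0 < b_lo)
  (Ha_bnd : forall i j x y t, (i < n)%nat -> (j < n)%nat ->
              a_lo <= a i j x y t <= a_hi)
  (Hb_bnd : forall i j x y t, (i < n)%nat -> (j < k)%nat -> b_lo <= b i j x y t)
  (Ha_cont : forall i j, (i < n)%nat -> (j < n)%nat -> cont_weight n k d (a i j))
  (Hb_cont : forall i j, (i < n)%nat -> (j < k)%nat -> cont_weight n k d (b i j))
  (u : nat -> fam -> R -> vec) (w : nat -> R -> vec)
  (Hu_y : forall j t c, (j < k)%nat -> (c < d)%nat ->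
            cont_fam k d (fun z => u j z t c))
  (Hu_t : forall j z c, (j < k)%nat -> (c < d)%nat ->
            piecewise_cont (fun t => u j z t c))
  (Hw : forall i c, (i < n)%nat -> (c < d)%nat -> continuity (fun t => w i t c))
  (x y : R -> fam)
  (Htraj : trajectory n k d EF EL sigma a b u w x y) :
  let Psi := fun t => fmax n (fun i => set_dist d (x t i) (conv_hull k d (y t)) ^ 2) in
  let q := fun t => fmax k (fun j => vnorm d (u j (y t) t))
                    + fmax n (fun i => vnorm d (w i t)) in
  forall t, 0 <= t -> dini_upper_le (fun s => sqrt (Psi s)) t (q t).
Proof.
  intros Psi q t Ht eps Heps.
  destruct Htraj as [_ [_ [Hy Hx]]].
  assert (Hdist_nonneg : forall t' j, 0 <= set_dist d (x t' j) (conv_hull k d (y t')))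
    by (intros; apply set_dist_nonneg, conv_hull_nonempty, Hk).
  set (D := sqrt (Psi t)).
  assert (HD : forall j, (j < n)%nat -> set_dist d (x t j) (conv_hull k d (y t)) <= D)
    by (intros j Hj; apply (sqrt_fmax_sq_ge n (fun i => set_dist d (x t i) (conv_hull k d (y t)))); auto).
  destruct (hull_dist_growth n k d EF EL sigma a b u w x y t D eps Hk
              (fun i j X Y s Hi Hj => Rlt_le _ _ (Rlt_le_trans _ _ _ Ha_lo (proj1 (Ha_bnd i j X Y s Hi Hj))))
              (fun i j X Y s Hi Hj => Rlt_le _ _ (Rlt_le_trans _ _ _ Hb_lo (Hb_bnd i j X Y s Hi Hj)))
              (fun j c Hj Hc => Hy j c t Hj Hc Ht) (fun i c Hi Hc => Hx i c t Hi Hc Ht) HD Heps)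
    as [delta [Hdelta Hgrowth]].
  exists delta. split; [exact Hdelta|]. intros s Hs.
  assert (Hnext : sqrt (Psi (t + s)) <= D + s * (q t + eps)).
  { apply sqrt_fmax_sq_le; [lia|]. intros i Hi. split; [apply Hdist_nonneg|].
    apply Hgrowth; auto. }
  apply Rmult_le_reg_l with s; [lra|].
  replace (s * ((sqrt (Psi (t + s)) - D) / s)) with (sqrt (Psi (t + s)) - D)
    by (field; lra).
  lra.
Qed.
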